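(* Let $n_0$ be a positive integer and let $X,Y$ be complex linear spaces. A mapping $f:X\to Y$ satisfies $$f(2\mu x+\mu y)+f(\mu x+2\mu y)=\mu[f(3x)+f(3y)]$$ for all $x,y\in X$ and all $\mu\in\mathbb{T}^1_{n_0}$ if and only if $f$ is $\mathbb{C}$-linear.
   Context: $\mathbb{T}^1_{n_0}:=\{e^{i\theta}: 0\le\theta\le 2\pi/n_0\}$. *)

From HB Require Import structures.
From mathcomp Require Import all_boot all_order all_algebra.
From mathcomp Require Import reals trigo.
From mathcomp Require Import complex.
Set Implicit Arguments. Unset Strict Implicit. Unset Printing Implicit Defensive.
Import Order.TTheory GRing.Theory Num.Theory.
Local Open Scope ring_scope.

Definition expi (R : realType) (theta : R) : R[i] := Complex (cos theta) (sin theta).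

Definition inT1 (R : realType) (n0 : nat) (mu : R[i]) : Prop :=
  exists theta : R, [/\ 0 <= theta, theta <= 2 * pi / n0%:R & mu = expi theta].

From HB Require Import structures.
From mathcomp Require Import all_boot all_order all_algebra.
From mathcomp Require Import reals trigo complex.
From mathcomp Require Import ring lra.
Import Order.TTheory GRing.Theory Num.Theory.
Local Open Scope ring_scope.

(* Taking mu = 1 and changing variables to u = 2x + y, v = x + 2y, the equation
   reads f u + f v = f (2u - v) + f (2v - u); applied at the midpoint and the two
   quarter points of a segment it gives Jensen's equation, hence additivity once
   f 0 = 0, which follows from x = y = 0 and any mu <> 1.  For an additive f the
   scalars a with f (a x) = a f x form a subfield of C.  Taking y = 0 puts every
   mu of the arc in it, hence cos theta = (mu^2 + 1) / (2 mu) for mu = e^{i theta}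
   with small theta, hence a whole real interval [cos alpha, 1], hence all reals
   (archimedean property), hence i = (e^{i alpha} - cos alpha) / sin alpha and
   finally all of C. *)

Section ScalableAt.
Context {K : fieldType} {X Y : lmodType K} {f : X -> Y}.
Hypothesis fD : forall u v, f (u + v) = f u + f v.

Lemma additive_f0 : f 0 = 0.
Proof. by apply: (addrI (f 0)); rewrite -fD !addr0. Qed.

Lemma additive_fN u : f (- u) = - f u.
Proof. by apply/eqP; rewrite -subr_eq0 opprK -fD addNr additive_f0. Qed.

Definition scalable_at (a : K) := forall x, f (a *: x) = a *: f x.

Lemma scalable_atD a b : scalable_at a -> scalable_at b -> scalable_at (a + b).
Proof. by move=> ha hb x; rewrite !scalerDl fD ha hb. Qed.

Lemma scalable_atB a b : scalable_at a -> scalable_at b -> scalable_at (a - b).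
Proof. by move=> ha hb x; rewrite !scalerBl fD additive_fN ha hb. Qed.

Lemma scalable_atM a b : scalable_at a -> scalable_at b -> scalable_at (a * b).
Proof. by move=> ha hb x; rewrite -!scalerA ha hb. Qed.

Lemma scalable_atV a : scalable_at a -> scalable_at a^-1.
Proof.
move=> ha x; have [->|a0] := eqVneq a 0; first by rewrite invr0 !scale0r additive_f0.
by rewrite -{2}[x](scalerKV a0) ha scalerK.
Qed.

Lemma scalable_at_div a b : scalable_at a -> scalable_at b -> scalable_at (a / b).
Proof. by move=> ha hb; apply: scalable_atM => //; apply: scalable_atV. Qed.

Lemma scalable_at_nat n : scalable_at n%:R.
Proof.
elim: n => [|n IHn] x; first by rewrite !scale0r additive_f0.
by rewrite -addn1 natrD !scalerDl fD IHn !scale1r.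
Qed.

End ScalableAt.
Arguments scalable_at {K X Y} f a.

Section Additivity.
Context {K : numFieldType} {X Y : lmodType K} {f : X -> Y}.
Hypothesis f_eq : forall x y : X, f (2 *: x + y) + f (x + 2 *: y) = f (3 *: x) + f (3 *: y).

Definition comb (x y : X) (a b : K) : X := a *: x + b *: y.

Lemma combD x y a b c d : comb x y a b + comb x y c d = comb x y (a + c) (b + d).
Proof. by rewrite /comb !scalerDl addrACA. Qed.

Lemma combZ x y k a b : k *: comb x y a b = comb x y (k * a) (k * b).
Proof. by rewrite /comb scalerDr !scalerA. Qed.

Lemma reflection_comb x y a b c d a' b' c' d' :
  a' = 2 * a - c -> b' = 2 * b - d -> c' = 2 * c - a -> d' = 2 * d - b ->
  f (comb x y a b) + f (comb x y c d) = f (comb x y a' b') + f (comb x y c' d').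
Proof.
move=> -> -> -> ->.
set u := comb x y ((2 * a - c) / 3) ((2 * b - d) / 3).
set v := comb x y ((2 * c - a) / 3) ((2 * d - b) / 3).
apply: etrans (etrans _ (f_eq u v)) _.
  by rewrite !combZ !combD; congr (f (comb _ _ _ _) + f (comb _ _ _ _)); field.
by rewrite !combZ; congr (f (comb _ _ _ _) + f (comb _ _ _ _)); field.
Qed.

Lemma jensen_comb x y a b c d :
  f (comb x y a b) + f (comb x y c d) = 2 *: f (comb x y ((a + c) / 2) ((b + d) / 2)).
Proof.
set m := comb x y ((a + c) / 2) ((b + d) / 2).
set p := comb x y ((3 * a + c) / 4) ((3 * b + d) / 4).
set q := comb x y ((a + 3 * c) / 4) ((b + 3 * d) / 4).
have e1 : f m + f p = f q + f (comb x y a b) by apply: reflection_comb; field.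
have e2 : f m + f q = f p + f (comb x y c d) by apply: reflection_comb; field.
apply: (addrI (f p + f q)).
rewrite scaler_nat mulr2n [RHS]addrACA [f p + f m]addrC [f q + f m]addrC e1 e2.
by rewrite [RHS]addrACA [f q + f p]addrC.
Qed.

Lemma additive_of_f_eq : f 0 = 0 -> forall x y, f (x + y) = f x + f y.
Proof.
move=> f0 x y.
have := jensen_comb x y 1 0 0 1; have := jensen_comb x y 1 1 0 0.
rewrite /comb !addr0 !add0r !scale1r !scale0r !addr0 !add0r f0 addr0 => -> //.
Qed.

End Additivity.

Lemma interval_subring_full (R : archiRealFieldType) (P : R -> Prop) (c : R) :
  c < 1 -> (forall t, c <= t <= 1 -> P t) -> (forall n, P n%:R) ->
  (forall a b, P a -> P b -> P (a - b)) -> (forall a b, P a -> P b -> P (a * b)) ->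
  forall r, P r.
Proof.
move=> c_lt1 Pint Pnat PB PM.
suff Ple1 r : r <= 1 -> P r.
  move=> r; have [/Ple1 //|r_gt1] := lerP r 1.
  by rewrite -(subKr 2%:R r); apply: PB (Pnat 2) (Ple1 _ _); lra.
move=> r_le1.
have k_ge0 : 0 <= (1 - r) / (1 - c) by apply: divr_ge0; lra.
have := archi_boundP k_ge0; set n := Num.Def.archi_bound _ => k_lt_n.
have n_gt0 : 0 < n%:R :> R by apply: le_lt_trans k_lt_n.
set t := 1 - (1 - r) / n%:R.
have t_le1 : t <= 1 by rewrite /t gerBl; apply: divr_ge0 => //; lra.
have c_le_t : c <= t.
  have : (1 - r) / n%:R <= 1 - c.
    by rewrite ler_pdivrMr // mulrC -ler_pdivrMr ?ltW //; lra.
  rewrite /t; lra.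
have -> : r = 1 - n%:R * (1 - t) by rewrite /t; field; rewrite gt_eqF.
by apply: PB (Pnat 1) (PM _ _ (Pnat n) (PB _ _ (Pnat 1) (Pint t _))); rewrite c_le_t.
Qed.

Section ArcScalars.
Local Open Scope complex_scope.
Variables (R : realType) (n0 : nat).
Hypothesis n0_gt0 : (0 < n0)%N.

(* A point of the arc whose angle is small enough for sin alpha > 0 and for cos
   to be injective on [0, alpha]; 2 pi / n0 itself fails both when n0 <= 2. *)
Let alpha : R := pi / 2 / n0%:R.

Let alpha_gt0 : 0 < alpha.
Proof. by rewrite !divr_gt0 ?ltr0n ?pi_gt0. Qed.

Let alpha_lt_pi : alpha < pi.
Proof.
have pi_gt0 := pi_gt0 R; rewrite /alpha ltr_pdivrMr ?ltr0n //.
by rewrite (@lt_le_trans _ _ pi) ?ler_peMr ?ler1n //; lra.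
Qed.

Lemma inT1_expi {th : R} : 0 <= th -> th <= alpha -> inT1 n0 (expi th).
Proof.
move=> th_ge0 th_le; exists th; split => //; apply: le_trans th_le _.
by rewrite ler_pM2r ?invr_gt0 ?ltr0n //; have := pi_gt0 R; lra.
Qed.

Lemma expi0 : expi (0 : R) = 1.
Proof. by rewrite /expi cos0 sin0. Qed.

Lemma expi_sqrD1 (th : R) : expi th ^+ 2 + 1 = (2 * cos th)%:C * expi th.
Proof.
apply/eqP; rewrite /expi expr2 eq_complex /=.
by have := cos2Dsin2 th => ?; apply/andP; split; apply/eqP; nra.
Qed.

Lemma sin_alpha_gt0 : 0 < sin alpha.
Proof. by apply: sin_gt0_pi; rewrite alpha_gt0 alpha_lt_pi. Qed.

Lemma expi_alpha_neq1 : expi alpha != 1.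
Proof.
apply: contra_neq (lt0r_neq0 sin_alpha_gt0); by move=> /(congr1 (@complex.Im R)).
Qed.

Lemma cos_arc_onto t : cos alpha <= t <= 1 -> exists2 th, 0 <= th <= alpha & cos th = t.
Proof.
move=> /andP[cos_le_t t_le1].
have t_in : -1 <= t <= 1 by rewrite t_le1 (le_trans (cos_geN1 _) cos_le_t).
exists (acos t); last exact: acosK.
rewrite acos_ge0 //= leNgt; apply/negP => lt_acos.
have := ltr_cos (x := alpha) (y := acos t); rewrite !in_itv /= lt_acos acosK //.
rewrite (ltW alpha_gt0) (ltW alpha_lt_pi) acos_ge0 ?acos_lepi //.
by move=> /(_ isT isT); rewrite ltNge cos_le_t.
Qed.

Variables (X Y : lmodType R[i]) (f : X -> Y).
Hypothesis f_eq : forall (x y : X) (mu : R[i]), inT1 n0 mu ->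
  f ((2 * mu) *: x + mu *: y) + f (mu *: x + (2 * mu) *: y)
  = mu *: (f (3 *: x) + f (3 *: y)).

Lemma f_eq_at1 x y : f (2 *: x + y) + f (x + 2 *: y) = f (3 *: x) + f (3 *: y).
Proof.
have := f_eq x y _ (inT1_expi (lexx 0) (ltW alpha_gt0)).
by rewrite expi0 mulr1 !scale1r.
Qed.

Lemma f_eq_f0 : f 0 = 0.
Proof.
have := f_eq 0 0 _ (inT1_expi (ltW alpha_gt0) (lexx _)).
rewrite !scaler0 !addr0 => /eqP.
rewrite -subr_eq0 -{1}[f 0 + f 0]scale1r -scalerBl scaler_eq0 subr_eq0.
by rewrite eq_sym (negbTE expi_alpha_neq1) -mulr2n -scaler_nat scaler_eq0 pnatr_eq0 => /eqP.
Qed.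

Let fD : forall u v, f (u + v) = f u + f v := additive_of_f_eq f_eq_at1 f_eq_f0.

Lemma scalable_at_inT1 mu : inT1 n0 mu -> scalable_at f mu.
Proof.
move=> T1mu x; apply: (@scalerI _ _ (3%:R : R[i])); first by rewrite pnatr_eq0.
have := f_eq x 0 _ T1mu; rewrite !scaler0 !addr0 f_eq_f0 addr0 -scalerA.
rewrite (scalable_at_nat fD 2) (scalable_at_nat fD 3) -{2}[f (mu *: x)]scale1r -scalerDl natr1.
by rewrite scalerA mulrC -scalerA => <-.
Qed.

Lemma scalable_at_cos th : 0 <= th -> th <= alpha -> scalable_at f (cos th)%:C.
Proof.
move=> th_ge0 th_le; have T1mu := scalable_at_inT1 _ (inT1_expi th_ge0 th_le).
have expi_neq0 : expi th != 0.
  apply/eqP => expi_eq0; have := expi_sqrD1 th.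
  by rewrite expi_eq0 mulr0 expr0n add0r => /eqP; rewrite oner_eq0.
have -> : (cos th)%:C = (expi th ^+ 2 + 1) / expi th / 2.
  by rewrite expi_sqrD1 (mulfK expi_neq0) rmorphM rmorph_nat mulrC mulKf ?pnatr_eq0.
have sq : scalable_at f (expi th ^+ 2) by rewrite expr2; exact: scalable_atM.
apply: scalable_at_div fD _ _ (scalable_at_div fD _ _ _ T1mu) (scalable_at_nat fD 2).
exact: scalable_atD fD _ _ sq (scalable_at_nat fD 1).
Qed.

Lemma scalable_at_real r : scalable_at f r%:C.
Proof.
apply: (@interval_subring_full _ (fun r => scalable_at f r%:C) (cos alpha)).
- rewrite -cos0 ltr_cos ?in_itv /= ?lexx ?pi_ge0 ?alpha_gt0 //.
  by rewrite (ltW alpha_gt0) (ltW alpha_lt_pi).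
- by move=> t /cos_arc_onto[th /andP[th_ge0 th_le] <-]; exact: scalable_at_cos.
- by move=> n; rewrite rmorph_nat; apply: scalable_at_nat.
- by move=> a b ha hb; rewrite rmorphB; exact: scalable_atB fD _ _ ha hb.
- by move=> a b ha hb; rewrite rmorphM; apply: scalable_atM.
Qed.

Lemma scalable_at_i : scalable_at f 'i%C.
Proof.
have -> : 'i%C = (expi alpha - (cos alpha)%:C) / (sin alpha)%:C.
  rewrite /expi [Complex (cos _) _]complexE /= addrC addKr mulfK //.
  by rewrite fmorph_eq0 lt0r_neq0 ?sin_alpha_gt0.
apply: scalable_at_div fD _ _ _ (scalable_at_real _).
apply: scalable_atB fD _ _ _ (scalable_at_real _).
exact/scalable_at_inT1/inT1_expi/lexx/ltW.
Qed.

Lemma linear_of_f_eq : linear f.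
Proof.
move=> a u v; rewrite fD (complexE a); congr (_ + _).
exact: scalable_atD fD _ _ (scalable_at_real _) (scalable_atM _ _ scalable_at_i (scalable_at_real _)) u.
Qed.

End ArcScalars.

Lemma f_eq_of_linear (K : comNzRingType) (X Y : lmodType K) (f : X -> Y) :
  linear f -> forall (x y : X) (mu : K),
  f ((2 * mu) *: x + mu *: y) + f (mu *: x + (2 * mu) *: y)
  = mu *: (f (3 *: x) + f (3 *: y)).
Proof.
move=> lin_f x y mu.
have f0 : f 0 = 0.
  have f00 := lin_f 1 0 0; rewrite !scale1r addr0 in f00.
  by apply: (addrI (f 0)); rewrite addr0 -f00.
have fD u v : f (u + v) = f u + f v by rewrite -{1}[u]scale1r lin_f scale1r.
have fZ a u : f (a *: u) = a *: f u by rewrite -[a *: u]addr0 lin_f f0 addr0.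
rewrite !fD !fZ scalerDr !scalerA addrACA -!scalerDl.
by congr (_ *: _ + _ *: _); ring.
Qed.

Theorem lemma2p9 (R : realType) (n0 : nat) (hn0 : (0 < n0)%N)
    (X Y : lmodType R[i]) (f : X -> Y) :
  (forall (x y : X) (mu : R[i]), inT1 n0 mu ->
     f ((2 * mu) *: x + mu *: y) + f (mu *: x + (2 * mu) *: y)
     = mu *: (f (3 *: x) + f (3 *: y)))
  <-> linear f.
Proof.
split; first exact: linear_of_f_eq.
by move=> lin_f x y mu _; apply: f_eq_of_linear.
Qed.
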